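(* For all integers $t,r\ge 2$, $$F_v(T_{2tr,2r},T_{2tr,2r};2r+1)\le 5F_v(T_{tr,r},T_{tr,r};r+1).$$ In particular, $F_v(T_{4t,4},T_{4t,4};5)\le 50t-25$ for all $t\ge2$.
   Context: All graphs are finite and simple. $T_{n,s}$ is the Turán graph: the complete $s$-partite graph on $n$ vertices with parts as equal as possible (so $T_{st,s}$ is complete $s$-partite with all parts of size $t$; $T_{2t,2}=K_{t,t}$). ''A graph $F$ contains $H$'' means $F$ has a (not necessarily induced) subgraph isomorphic to $H$. $G\rightarrow(H_1,H_2)^v$ means: for every partition $V(G)=X_1\cup X_2$ there is $i$ such that the subgraph induced by $X_i$ contains $H_i$. $F_v(H_1,H_2;k)$ is the minimum number of vertices of a $K_k$-free graph $G$ with $G\rightarrow(H_1,H_2)^v$. *)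

From mathcomp Require Import all_boot.
Set Implicit Arguments. Unset Strict Implicit. Unset Printing Implicit Defensive.

(* A simple graph on vertex type T is a symmetric irreflexive e : rel T. *)

(* The subgraph of (T,e) induced by X contains (V,h) (not necessarily induced):
   there is an injective map V -> X preserving adjacency. *)
Definition contains_in (T : finType) (e : rel T) (X : {set T})
    (V : finType) (h : rel V) : Prop :=
  exists f : V -> T, [/\ injective f, (forall v, f v \in X) &
                         (forall u v, h u v -> e (f u) (f v))].

Definition complete_rel (k : nat) : rel 'I_k := fun i j => i != j.

(* Turan graph T_{n,s}: vertices 'I_n, parts = residue classes mod s
   (sizes differ by at most 1), edges between different parts. *)
Definition turan_rel (n s : nat) : rel 'I_n := fun i j => i %% s != j %% s.

Definition Kfree (T : finType) (e : rel T) (k : nat) : Prop :=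
  ~ @contains_in T e [set: T] _ (@complete_rel k).

Definition vertex_arrows (T : finType) (e : rel T)
    (V1 : finType) (h1 : rel V1) (V2 : finType) (h2 : rel V2) : Prop :=
  forall X1 : {set T}, contains_in e X1 h1 \/ contains_in e (~: X1) h2.

(* There is a K_k-free simple graph on n vertices with G -> (H1,H2)^v.
   F_v(H1,H2;k) is the least n with Fv_admissible k H1 H2 n. *)
Definition Fv_admissible (k : nat) (V1 : finType) (h1 : rel V1)
    (V2 : finType) (h2 : rel V2) (n : nat) : Prop :=
  exists e : rel 'I_n, [/\ symmetric e, irreflexive e, Kfree e k &
                          vertex_arrows e h1 h2].

From mathcomp Require Import all_boot zify.
Set Implicit Arguments. Unset Strict Implicit. Unset Printing Implicit Defensive.

(* Let G be a K_{r+1}-free graph with G -> (T_{tr,r}, T_{tr,r})^v and consider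
   the lexicographic product C5[G], replacing every vertex of the 5-cycle by a
   copy of G.  A clique of C5[G] lies over a clique of C5, i.e. over at most two
   vertices, so it has at most 2r vertices.  Given a 2-colouring of C5[G], colour
   each vertex a of C5 by a colour class whose restriction to the copy of G over
   a contains T_{tr,r}; as C5 is an odd cycle, two adjacent vertices get the same
   colour, and the join of the two copies of T_{tr,r} over them contains
   T_{2tr,2r}.  Iterating twice from the edgeless graph on 2t-1 vertices, which
   arrows T_{t,1} = \bar K_t, gives the bound 5 * 5 * (2t - 1). *)

Lemma Fv_admissible_card (T : finType) (e : rel T) k
    (V1 : finType) (h1 : rel V1) (V2 : finType) (h2 : rel V2) :
  symmetric e -> irreflexive e -> Kfree e k -> vertex_arrows e h1 h2 ->
  Fv_admissible k h1 h2 #|T|.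
Proof.
move=> sym_e irr_e free_e arr_e.
exists (fun i j => e (enum_val i) (enum_val j)); split.
- by move=> i j; apply: sym_e.
- by move=> i; apply: irr_e.
- move=> [f [inj_f _ hom_f]]; apply: free_e.
  exists (fun v => enum_val (f v)); split => //.
  by move=> u v /enum_val_inj /inj_f.
- move=> X; have [] := arr_e [set x | enum_rank x \in X] => -[f [inj_f in_f hom_f]];
    [left | right]; exists (fun v => enum_rank (f v)); split.
  + by move=> u v /enum_rank_inj /inj_f.
  + by move=> v; have := in_f v; rewrite inE.
  + by move=> u v /hom_f; rewrite !enum_rankK.
  + by move=> u v /enum_rank_inj /inj_f.
  + by move=> v; have := in_f v; rewrite !inE.
  + by move=> u v /hom_f; rewrite !enum_rankK.
Qed.

Lemma inj_into_set (T V : finType) (X : {set T}) :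
  #|V| <= #|X| -> exists f : V -> T, injective f /\ forall v, f v \in X.
Proof.
move=> leVX; exists (fun v => enum_val (widen_ord leVX (enum_rank v))); split.
- move=> u v /enum_val_inj /(congr1 val) /= /val_inj; exact: enum_rank_inj.
- by move=> v; apply: enum_valP.
Qed.

Lemma contains_in_trans (T : finType) (e : rel T) (X : {set T})
    (V : finType) (h : rel V) (W : finType) (g : rel W) :
  contains_in e X h -> contains_in h setT g -> contains_in e X g.
Proof.
move=> [f [inj_f in_f hom_f]] [f' [inj_f' _ hom_f']].
exists (f \o f'); split => [u v /inj_f /inj_f' // | v | u v /hom_f' /hom_f //].
exact: in_f.
Qed.

Lemma vertex_arrows_sub (T : finType) (e : rel T)
    (V1 : finType) (h1 : rel V1) (V2 : finType) (h2 : rel V2)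
    (W1 : finType) (g1 : rel W1) (W2 : finType) (g2 : rel W2) :
  contains_in h1 setT g1 -> contains_in h2 setT g2 ->
  vertex_arrows e h1 h2 -> vertex_arrows e g1 g2.
Proof.
move=> sub1 sub2 arr_e X.
case: (arr_e X) => [in_X | in_CX].
- by left; apply: contains_in_trans in_X sub1.
- by right; apply: contains_in_trans in_CX sub2.
Qed.

Lemma edgeless_Fv_admissible (V : finType) (h : rel V) :
  (forall u v, ~~ h u v) -> Fv_admissible 2 h h (2 * #|V|).-1.
Proof.
move=> no_edge.
have embed (X : {set 'I_(2 * #|V|).-1}) : #|V| <= #|X| ->
    contains_in (fun _ _ => false) X h.
  move=> /inj_into_set [f [inj_f in_f]].
  by exists f; split => // u v; rewrite (negbTE (no_edge u v)).
exists (fun _ _ => false); split => //.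
- by move=> [f [_ _ hom_f]]; have := hom_f ord0 (@Ordinal 2 1 isT) isT.
- move=> X; have := cardsC X; rewrite card_ord => cardX.
  have [leX | leCX] : #|V| <= #|X| \/ #|V| <= #|~: X| by lia.
  + by left; apply: embed.
  + by right; apply: embed.
Qed.

Lemma turan_rel_edgeless n (u v : 'I_n) : ~~ @turan_rel n 1 u v.
Proof. by rewrite /turan_rel !modn1. Qed.

Definition contains_inb (T : finType) (e : rel T) (X : {set T})
    (V : finType) (h : rel V) : bool :=
  [exists f : {ffun V -> T}, [&& injectiveb f, [forall v, f v \in X] &
                                [forall u, forall v, h u v ==> e (f u) (f v)]]].

Lemma contains_inP (T : finType) (e : rel T) (X : {set T}) (V : finType) (h : rel V) :
  reflect (contains_in e X h) (contains_inb e X h).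
Proof.
apply: (iffP existsP) => [[f /and3P [/injectiveP inj_f /forallP in_f /forallP hom_f]]
                          | [f [inj_f in_f hom_f]]].
- exists f; split => // u v; exact/implyP/(forallP (hom_f u)).
- exists [ffun v => f v]; apply/and3P; split.
  + by apply/injectiveP => u v; rewrite !ffunE => /inj_f.
  + by apply/forallP => v; rewrite ffunE.
  + by apply/forallP => u; apply/forallP => v; apply/implyP; rewrite !ffunE; apply: hom_f.
Qed.

Definition lexi_rel (U T : finType) (h : rel U) (e : rel T) : rel (U * T) :=
  fun u v => if u.1 == v.1 then e u.2 v.2 else h u.1 v.1.

Definition join_rel (V1 V2 : finType) (h1 : rel V1) (h2 : rel V2) : rel (V1 + V2) :=
  fun u v => match u, v with
             | inl x, inl y => h1 x y
             | inr x, inr y => h2 x y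
             | _, _ => true
             end.

Section LexicographicProduct.

Variables (U T : finType) (h : rel U) (e : rel T).
Hypotheses (sym_h : symmetric h) (irr_h : irreflexive h).

Definition fibre (Y : {set U * T}) (a : U) : {set T} := [set x | (a, x) \in Y].

Lemma lexi_sym : symmetric e -> symmetric (lexi_rel h e).
Proof. by move=> sym_e u v; rewrite /lexi_rel eq_sym sym_e sym_h. Qed.

Lemma lexi_irr : irreflexive e -> irreflexive (lexi_rel h e).
Proof. by move=> irr_e u; rewrite /lexi_rel eqxx irr_e. Qed.

Lemma lexi_clique_fibre s k (f : 'I_k -> U * T) (c : U) :
  Kfree e s.+1 -> injective f ->
  (forall i j, complete_rel i j -> lexi_rel h e (f i) (f j)) ->
  #|[set i | (f i).1 == c]| <= s.
Proof.
move=> free_e inj_f hom_f; rewrite leqNgt; apply/negP => big_fibre.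
have /inj_into_set [g [inj_g in_g]] : #|'I_s.+1| <= #|[set i | (f i).1 == c]|.
  by rewrite card_ord.
have fst_g v : (f (g v)).1 = c by have := in_g v; rewrite inE => /eqP.
apply: free_e; exists (fun v => (f (g v)).2); split => // [u v eq2 | u v uv].
- apply/inj_g/inj_f.
  by rewrite [f (g u)]surjective_pairing [f (g v)]surjective_pairing eq2 !fst_g.
- have := hom_f (g u) (g v); rewrite /complete_rel (inj_eq inj_g) => /(_ uv).
  by rewrite /lexi_rel !fst_g eqxx.
Qed.

Lemma lexi_Kfree s :
  (forall a b c, h a b -> h b c -> h a c -> False) ->
  Kfree e s.+1 -> Kfree (lexi_rel h e) (2 * s).+1.
Proof.
move=> no_triangle free_e [f [inj_f _ hom_f]].
have adj_fst i j : (f i).1 != (f j).1 -> h (f i).1 (f j).1.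
  move=> ne_ij; have /hom_f : complete_rel i j by apply: contraNneq ne_ij => ->.
  by rewrite /lexi_rel (negbTE ne_ij).
have small_fibre c := lexi_clique_fibre c free_e inj_f hom_f.
set a := (f ord0).1; set Sa := [set i | (f i).1 == a].
have := cardsC Sa; rewrite card_ord => card_split.
have [j ne_ja | all_a] := pickP (fun i => (f i).1 != a).
- set b := (f j).1.
  have sub_b : ~: Sa \subset [set i | (f i).1 == b].
    apply/subsetP => i; rewrite !inE => ne_ia; apply/negPn/negP => ne_ib.
    by apply: (no_triangle a b (f i).1); apply: adj_fst; rewrite eq_sym.
  have := subset_leq_card sub_b; have := small_fibre a; have := small_fibre b.
  rewrite -/Sa; lia.
- have : Sa = setT by apply/setP => i; rewrite !inE; apply/negbFE/all_a.
  by move=> eq_Sa; have := small_fibre a; rewrite -/Sa eq_Sa cardsT card_ord; lia.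
Qed.

Lemma lexi_contains_join (Y : {set U * T}) (a b : U)
    (V1 V2 : finType) (h1 : rel V1) (h2 : rel V2) :
  h a b -> contains_in e (fibre Y a) h1 -> contains_in e (fibre Y b) h2 ->
  contains_in (lexi_rel h e) Y (join_rel h1 h2).
Proof.
move=> hab [f1 [inj_f1 in_f1 hom_f1]] [f2 [inj_f2 in_f2 hom_f2]].
have ne_ab : a != b by apply: contraTneq hab => ->; rewrite irr_h.
pose g (w : V1 + V2) := match w with inl x => (a, f1 x) | inr y => (b, f2 y) end.
exists g; split.
- move=> [x|x] [y|y] [] => [/inj_f1 -> | eq_ab | eq_ba | /inj_f2 ->] //;
    by move: ne_ab; rewrite ?eq_ab ?eq_ba eqxx.
- by move=> [x|x]; [have := in_f1 x | have := in_f2 x]; rewrite inE.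
- move=> [x|x] [y|y] /=; rewrite /lexi_rel /= ?eqxx; [exact: hom_f1 | | | exact: hom_f2].
  + by rewrite (negbTE ne_ab).
  + by rewrite eq_sym (negbTE ne_ab) sym_h.
Qed.

Lemma fibreC (Y : {set U * T}) (a : U) : fibre (~: Y) a = ~: fibre Y a.
Proof. by apply/setP => x; rewrite !inE. Qed.

Lemma lexi_arrows (V1 : finType) (h1 : rel V1) (V2 : finType) (h2 : rel V2) :
  (forall C : {set U}, exists a b, h a b /\ (a \in C) = (b \in C)) ->
  vertex_arrows e h1 h2 ->
  vertex_arrows (lexi_rel h e) (join_rel h1 h1) (join_rel h2 h2).
Proof.
move=> monochromatic_edge arr_e X.
pose C := [set a | contains_inb e (fibre X a) h1].
have in_C a : a \in C -> contains_in e (fibre X a) h1.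
  by rewrite inE => /contains_inP.
have notin_C a : a \notin C -> contains_in e (fibre (~: X) a) h2.
  rewrite inE fibreC => /contains_inP not_h1.
  by have [//|] := arr_e (fibre X a).
have [a [b [hab same_colour]]] := monochromatic_edge C.
have [aC | aNC] := boolP (a \in C).
- by left; apply: (lexi_contains_join hab); apply: in_C; rewrite -?same_colour.
- by right; apply: (lexi_contains_join hab); apply: notin_C; rewrite -?same_colour.
Qed.

End LexicographicProduct.

Definition cycle5 : rel 'I_5 := fun a b => (ordS a == b) || (ordS b == a).

Lemma cycle5_sym : symmetric cycle5.
Proof. by move=> a b; rewrite /cycle5 orbC. Qed.

Lemma cycle5_irr : irreflexive cycle5.
Proof. by case=> [[|[|[|[|[|?]]]]] ?]. Qed.

Lemma cycle5_triangle_free a b c : cycle5 a b -> cycle5 b c -> cycle5 a c -> False.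
Proof. by move: a b c; do 3!case=> [[|[|[|[|[|?]]]]] ?]. Qed.

Lemma cycle5_monochromatic_edge (C : {set 'I_5}) :
  exists a b, cycle5 a b /\ (a \in C) = (b \in C).
Proof.
have [a same | alternating] := pickP (fun a => (a \in C) == (ordS a \in C)).
  by exists a, (ordS a); rewrite /cycle5 eqxx; split => //; apply/eqP.
have flip a : (ordS a \in C) = ~~ (a \in C).
  by have := alternating a; case: (a \in C); case: (ordS a \in C).
have odd_cycle : ordS (ordS (ordS (ordS (ordS (ord0 : 'I_5))))) = ord0 by apply/val_inj.
by have := congr1 (fun x => x \in C) odd_cycle; rewrite /= !flip; case: (_ \in C).
Qed.

Section TuranDoubling.

Variables t s : nat.
Hypothesis s_gt0 : 0 < s.

Lemma modn_double i : i %% (2 * s) = odd (i %/ s) * s + i %% s.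
Proof.
have r_lt : i %% s < s by rewrite ltn_pmod.
rewrite {1}(divn_eq i s) -{1}(odd_double_half (i %/ s)).
have -> : (odd (i %/ s) + (i %/ s)./2.*2) * s + i %% s =
          (i %/ s)./2 * (2 * s) + (odd (i %/ s) * s + i %% s).
  by rewrite -mul2n; lia.
by rewrite modnMDl modn_small //; case: odd; lia.
Qed.

(* Vertex i of T_{2ts,2s} lies in part i %% 2s; the parity of i %/ s tells in
   which half of the 2s parts, and turan_half i is its vertex of T_{ts,s}. *)
Definition turan_half (i : nat) : nat := (i %/ s)./2 * s + i %% s.

Lemma turan_half_mod i : turan_half i %% s = i %% s.
Proof. by rewrite /turan_half modnMDl modn_mod. Qed.

Lemma turan_half_div i : turan_half i %/ s = (i %/ s)./2.
Proof. by rewrite /turan_half divnMDl // (divn_small (ltn_pmod _ s_gt0)) addn0. Qed.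

Lemma turan_half_lt i : i < 2 * t * s -> turan_half i < t * s.
Proof.
rewrite -ltn_divLR // => q_lt.
have : ((i %/ s)./2).+1 * s <= t * s by rewrite leq_mul2r; apply/orP; right; lia.
by have := ltn_pmod i s_gt0; rewrite /turan_half; lia.
Qed.

Lemma turan_half_inj i j :
  odd (i %/ s) = odd (j %/ s) -> turan_half i = turan_half j -> i = j.
Proof.
move=> same_parity eq_half.
have eq_mod : i %% s = j %% s by rewrite -turan_half_mod eq_half turan_half_mod.
have eq_div : i %/ s = j %/ s.
  rewrite -[i %/ s]odd_double_half -[j %/ s]odd_double_half same_parity.
  by rewrite -!turan_half_div eq_half.
by rewrite (divn_eq i s) (divn_eq j s) eq_mod eq_div.
Qed.

Lemma turan_double_in_join :
  contains_in (join_rel (@turan_rel (t * s) s) (@turan_rel (t * s) s)) setT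
              (@turan_rel (2 * t * s) (2 * s)).
Proof.
pose k (i : 'I_(2 * t * s)) : 'I_(t * s) := Ordinal (turan_half_lt (ltn_ord i)).
exists (fun i : 'I_(2 * t * s) => if odd (i %/ s) then inr (k i) else inl (k i)); split.
- move=> i j; case: ifP => odd_i; case: ifP => odd_j // [] eq_k;
    by apply/val_inj/turan_half_inj; rewrite ?odd_i ?odd_j.
- by move=> i; rewrite inE.
- move=> i j; rewrite /turan_rel !modn_double.
  case: ifP => odd_i; case: ifP => odd_j //=; rewrite !turan_half_mod;
    by rewrite eqn_add2l.
Qed.

End TuranDoubling.

Lemma cycle5_lexi_Fv_admissible t s n : 0 < s ->
  Fv_admissible s.+1 (@turan_rel (t * s) s) (@turan_rel (t * s) s) n ->
  Fv_admissible (2 * s).+1 (@turan_rel (2 * t * s) (2 * s))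
                           (@turan_rel (2 * t * s) (2 * s)) (5 * n).
Proof.
move=> s_gt0 [e [sym_e irr_e free_e arr_e]].
have arr_lexi := lexi_arrows cycle5_sym cycle5_irr cycle5_monochromatic_edge arr_e.
have := Fv_admissible_card (lexi_sym cycle5_sym sym_e) (@lexi_irr _ _ cycle5 _ irr_e)
  (lexi_Kfree cycle5_triangle_free free_e)
  (vertex_arrows_sub (turan_double_in_join t s_gt0) (turan_double_in_join t s_gt0) arr_lexi).
by rewrite card_prod !card_ord.
Qed.

Theorem mainTheorem9 :
  (forall t r : nat, 2 <= t -> 2 <= r ->
     forall n : nat,
       Fv_admissible r.+1 (@turan_rel (t * r) r) (@turan_rel (t * r) r) n ->
       exists m : nat, m <= 5 * n /\
         Fv_admissible (2 * r).+1 (@turan_rel (2 * t * r) (2 * r))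
                                  (@turan_rel (2 * t * r) (2 * r)) m)
  /\
  (forall t : nat, 2 <= t ->
     exists m : nat, m <= 50 * t - 25 /\
       Fv_admissible 5 (@turan_rel (4 * t) 4) (@turan_rel (4 * t) 4) m).
Proof.
split=> [t r _ r_ge2 n adm | t t_ge2].
  by exists (5 * n); split => //; apply: cycle5_lexi_Fv_admissible adm; lia.
have := edgeless_Fv_admissible (@turan_rel_edgeless (t * 1)).
rewrite card_ord => /(@cycle5_lexi_Fv_admissible t 1 _ isT).
have -> : 2 * t * 1 = t * 2 by lia.
move=> /(@cycle5_lexi_Fv_admissible t 2 _ isT).
have -> : 2 * t * 2 = 4 * t by lia.
by exists (5 * (5 * (2 * (t * 1)).-1)); split => //; lia.
Qed.
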